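(* Let $G$ be a tree with $n\ge k\ge 1$ vertices and let $\mathcal C_0,\dots,\mathcal C_l$ be an optimal (minimum-length) spanning restricted transition walk with $k$ agents, so $l=h^r_k(G)$. Let $y$ be the vertex of $G$ that is encountered last, i.e. the unique vertex of $\mathcal C_j\setminus\mathcal C_{j-1}$ for the largest $j$ at which a vertex not occurring in $\mathcal C_0,\dots,\mathcal C_{j-1}$ appears, and let $x$ be a vertex of $\mathcal C_0$ farthest (in $G$) from $y$. Let $P_{xy}$ be the path of $G$ between $x$ and $y$. Then $l \ge (n-k)+\sum_{e\in E} d^k_{P_{xy}}(e)$.
   Context: All graphs are finite, simple, undirected. A configuration of $k$ agents is a $k$-tuple of pairwise distinct vertices of $G$ whose induced subgraph is connected (identified with its vertex set when convenient). Configurations $(v_1,\dots,v_k)$, $(v'_1,\dots,v'_k)$ are adjacent if for every $i$ either $v_i=v'_i$ or $(v_i,v'_i)\in E$. A restricted transition walk is a sequence of configurations $\mathcal C_0,\dots,\mathcal C_l$ such that consecutive configurations are adjacent and $\mathcal C_{t+1}$ contains exactly one vertex not in $\mathcal C_t$ (a $1$-transition edge); it is spanning if every vertex lies in some $\mathcal C_t$. $h^r_k(G)$ is the minimum length of a spanning restricted transition walk. For a tree $G$, a path $P$ in $G$ and $k\ge1$, define $d^k_P(e)\in\{0,1\}$ for every edge $e$: $d^k_P(e)=0$ if $e$ lies on $P$; otherwise write $e=(u,v)$ with $u$ closer to $P$ than $v$, let $T_P(e)$ be the component of $G-e$ containing $v$, rooted at $v$, and set $d^k_P(e)=1$ if $T_P(e)$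 has height at least $k-1$ (equivalently, some vertex $z$ of $T_P(e)$ has distance at least $k$ from $u$), and $d^k_P(e)=0$ otherwise. *)

From HB Require Import structures.
From mathcomp Require Import all_boot all_order.
Set Implicit Arguments. Unset Strict Implicit. Unset Printing Implicit Defensive.

Definition connected_graph (T : finType) (e : rel T) : Prop :=
  forall x y : T, connect e x y.

Definition acyclic_graph (T : finType) (e : rel T) : Prop :=
  forall c : seq T, uniq c -> 2 < size c -> ~~ cycle e c.

Definition is_tree (T : finType) (e : rel T) : Prop :=
  [/\ symmetric e, irreflexive e, connected_graph e & acyclic_graph e].

Definition walk_of_length (T : finType) (e : rel T) (m : nat) (u v : T) : bool :=
  [exists p : m.-tuple T, path e u p && (last u p == v)].

(* graph distance: least m such that a walk of length m from u to v exists
   (every distance in a connected graph on #|T| vertices is < #|T|) *)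
Definition gdist (T : finType) (e : rel T) (u v : T) : nat :=
  find (fun m => walk_of_length e m u v) (iota 0 #|T|).

Definition induced (T : finType) (e : rel T) (A : seq T) : rel T :=
  fun a b => [&& e a b, a \in A & b \in A].

Definition is_config (T : finType) (e : rel T) (k : nat) (C : k.-tuple T) : bool :=
  uniq C &&
  [forall a : T, forall b : T,
     (a \in C) ==> (b \in C) ==> connect (induced e C) a b].

Definition config_adj (T : finType) (e : rel T) (k : nat) (C D : k.-tuple T) : bool :=
  [forall i : 'I_k, (tnth C i == tnth D i) || e (tnth C i) (tnth D i)].

Definition one_transition (T : finType) (k : nat) (C D : k.-tuple T) : bool :=
  #|[set z : T | (z \in D) && (z \notin C)]| == 1.

Definition rstep (T : finType) (e : rel T) (k : nat) (C D : k.-tuple T) : bool :=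
  config_adj e C D && one_transition C D.

(* the walk C_0, ..., C_l is  c0 :: s ; its length is l = size s *)
Definition restricted_walk (T : finType) (e : rel T) (k : nat)
    (c0 : k.-tuple T) (s : seq (k.-tuple T)) : bool :=
  all (@is_config T e k) (c0 :: s) && path (@rstep T e k) c0 s.

Definition spanning (T : finType) (k : nat) (c0 : k.-tuple T) (s : seq (k.-tuple T)) : Prop :=
  forall z : T, has (fun C : k.-tuple T => z \in C) (c0 :: s).

Definition optimal_walk (T : finType) (e : rel T) (k : nat)
    (c0 : k.-tuple T) (s : seq (k.-tuple T)) : Prop :=
  [/\ restricted_walk e c0 s, spanning c0 s &
      forall (c0' : k.-tuple T) (s' : seq (k.-tuple T)),
        restricted_walk e c0' s' -> spanning c0' s' -> size s <= size s'].

Definition first_occ (T : finType) (k : nat) (c0 : k.-tuple T) (s : seq (k.-tuple T))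
    (z : T) : nat :=
  find (fun C : k.-tuple T => z \in C) (c0 :: s).

Definition is_simple_path (T : finType) (e : rel T) (x y : T) (p : seq T) : Prop :=
  [/\ path e x p, last x p = y & uniq (x :: p)].

Definition edge_on_path (T : finType) (x : T) (p : seq T) (a b : T) : bool :=
  infix [:: a; b] (x :: p) || infix [:: b; a] (x :: p).

Definition dist_to_path (T : finType) (e : rel T) (x : T) (p : seq T) (w : T) : nat :=
  \big[minn/#|T|]_(z <- x :: p) gdist e w z.

Definition cut_edge (T : finType) (e : rel T) (a b : T) : rel T :=
  fun c d => e c d && ~~ (((c == a) && (d == b)) || ((c == b) && (d == a))).

(* for the edge (u,v) with u closer to P: some z in the component T_P(e) of
   G - e containing v has distance >= k from u *)
Definition d_oriented (T : finType) (e : rel T) (k : nat) (u v : T) : bool :=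
  [exists z : T, connect (cut_edge e u v) v z && (k <= gdist e u z)].

(* d^k_P({a,b}) (symmetric in a b); P = x :: p *)
Definition dkP (T : finType) (e : rel T) (k : nat) (x : T) (p : seq T) (a b : T) : nat :=
  if edge_on_path x p a b then 0
  else if dist_to_path e x p a < dist_to_path e x p b then nat_of_bool (d_oriented e k a b)
  else nat_of_bool (d_oriented e k b a).

(* sum over the edge set E, each undirected edge {a,b} counted once *)
Definition sum_dkP (T : finType) (e : rel T) (k : nat) (x : T) (p : seq T) : nat :=
  \sum_(a : T) \sum_(b : T | e a b && (enum_rank a < enum_rank b)) dkP e k x p a b.

(* Every step of a restricted walk brings exactly one vertex into the
   configuration that was not in the previous one.  The n - k vertices outside
   C_0 account for n - k steps: those at which they are visited for the first
   time.  Now let uv be an edge off P with d^k_P = 1, u nearer to P, and let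
   T_uv be the component of G - uv containing v.  The connected configuration
   that first visits a vertex of T_uv at distance >= k from u cannot contain u,
   so it lies inside T_uv; but C_0 (which contains x) and the configuration
   that first visits y (which is visited last) lie outside.  So the agents
   enter T_uv and later leave it; at the first exit an agent steps from v onto
   u, which has been occupied before.  This exit step is not a first visit,
   and it determines uv: u is the new vertex and v the previous position of
   the agent that moved onto it. *)

From mathcomp Require Import all_boot all_order.
Set Implicit Arguments. Unset Strict Implicit. Unset Printing Implicit Defensive.

Lemma nat_switch (P : pred nat) a b :
  a <= b -> P a -> ~~ P b -> exists2 t, a <= t < b & P t && ~~ P t.+1.
Proof.
elim: b => [|b IH]; first by rewrite leqn0 => /eqP-> ->.
rewrite leq_eqVlt => /orP[/eqP<- -> //|]; rewrite ltnS => le_ab Pa NPb.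
case Pb: (P b); first by exists b; rewrite ?le_ab ?Pb ?leqnn.
have [t /andP[le_at lt_tb] Pt] := IH le_ab Pa (negbT Pb).
by exists t; rewrite ?le_at ?ltnS 1?ltnW.
Qed.

Lemma path_enter (T : Type) (e : rel T) (P : pred T) a q :
  path e a q -> ~~ P a -> P (last a q) ->
  exists q1 b q2, [/\ q = q1 ++ b :: q2, ~~ P (last a q1), P b & e (last a q1) b].
Proof.
elim: q a => [|c q IH] a /=; first by move=> _ /negbTE ->.
move=> /andP[ac cq] NPa; case Pc: (P c); first by exists [::], c, q.
move=> /(IH c cq (negbT Pc)) [q1 [b [q2 [-> ? ? ?]]]].
by exists (c :: q1), b, q2.
Qed.

Lemma card_notin_tuple (T : finType) n (t : n.-tuple T) :
  uniq t -> #|[set z | z \notin t]| = #|T| - n.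
Proof.
move=> /card_uniqP uniq_t.
have -> : [set z | z \notin t] = ~: [set z in t] by apply/setP => z; rewrite !inE.
by rewrite cardsCs setCK cardsE uniq_t size_tuple.
Qed.

Section GraphDistance.

Variables (T : finType) (e : rel T).

Lemma walk_of_length_path u q : path e u q -> walk_of_length e (size q) u (last u q).
Proof. by move=> uq; apply/existsP; exists (in_tuple q); rewrite /= uq eqxx. Qed.

Lemma gdist_le_card u v : gdist e u v <= #|T|.
Proof. by have := find_size (fun m => walk_of_length e m u v) (iota 0 #|T|); rewrite size_iota. Qed.

Lemma gdist_le_path u q : path e u q -> gdist e u (last u q) <= size q.
Proof.
move=> uq; have [lt_qT|le_Tq] := ltnP (size q) #|T|; last exact: leq_trans (gdist_le_card _ _) le_Tq.
rewrite leqNgt; apply/negP => /(before_find 0).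
by rewrite nth_iota // add0n walk_of_length_path.
Qed.

Lemma gdist_walk u v : connect e u v -> walk_of_length e (gdist e u v) u v.
Proof.
case/connectP => q uq ->; case: (shortenP uq) => q' uq' uniq_q' _.
have lt_q'T : size q' < #|T| by move/card_uniqP: uniq_q' => /= <-; apply: max_card.
have has_walk : has (fun m => walk_of_length e m u (last u q')) (iota 0 #|T|).
  by apply/hasP; exists (size q'); rewrite ?mem_iota ?walk_of_length_path.
have := nth_find 0 has_walk; rewrite nth_iota ?add0n //.
by rewrite has_find size_iota in has_walk.
Qed.

Lemma dist_to_path_le x p w q : q \in x :: p -> dist_to_path e x p w <= gdist e w q.
Proof.
rewrite /dist_to_path; elim: (x :: p) => [|a r IH] //.
by rewrite inE big_cons => /orP[/eqP->|/IH]; [exact: geq_minl | exact: leq_trans (geq_minr _ _)].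
Qed.

Lemma dist_to_path_attained x p w :
  exists2 q, q \in x :: p & gdist e w q <= dist_to_path e x p w.
Proof.
rewrite /dist_to_path big_seq.
apply: (big_ind (fun m => exists2 q, q \in x :: p & gdist e w q <= m)).
- by exists x; rewrite ?mem_head ?gdist_le_card.
- by move=> m n [q ? ?] [q' ? ?]; rewrite /minn; case: ifP => _; [exists q | exists q'].
- by move=> q pq; exists q.
Qed.

Lemma induced_path_sub (A : seq T) a q : path (induced e A) a q -> {subset q <= A}.
Proof.
elim: q a => //= b q IH a /andP[/and3P[_ _ bA] /IH qA] w.
by rewrite inE => /orP[/eqP->|/qA].
Qed.

Lemma config_gdist_lt k (C : k.-tuple T) a b :
  is_config e C -> a \in C -> b \in C -> gdist e a b < k.
Proof.
case/andP=> _ /forallP conn_C aC bC.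
have /connectP[q aq ->] := implyP (implyP (forallP (conn_C a) b) aC) bC.
case: (shortenP aq) => q' aq' uniq_q' _.
have sub_q' : {subset a :: q' <= C}.
  by move=> w; rewrite inE => /orP[/eqP-> //|]; exact: (induced_path_sub aq').
have := uniq_leq_size uniq_q' sub_q'; rewrite size_tuple /=.
apply: leq_trans; rewrite ltnS gdist_le_path //.
by apply: sub_path aq' => c d /andP[].
Qed.

End GraphDistance.

Definition branch (T : finType) (e : rel T) (u v : T) : pred T :=
  connect (cut_edge e u v) v.

Lemma edge_on_path_cons (T : finType) (a b x y : T) p :
  edge_on_path x (y :: p) a b =
  [|| (a == x) && (b == y), (b == x) && (a == y) | edge_on_path y p a b].
Proof.
rewrite /edge_on_path /= (_ : prefix [::] p = true); last by case: p.
by rewrite !andbT; case: (a == x); case: (b == y); case: (b == x); case: (a == y);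
  rewrite ?orbT ?orbF.
Qed.

Lemma edge_on_pathC (T : finType) (x : T) p a b : edge_on_path x p a b = edge_on_path x p b a.
Proof. by rewrite /edge_on_path orbC. Qed.

Lemma path_cut_edge (T : finType) (e : rel T) a b x p :
  path e x p -> ~~ edge_on_path x p a b -> path (cut_edge e a b) x p.
Proof.
elim: p x => [|y p IH] x //= /andP[xy yp].
rewrite edge_on_path_cons => /norP[ab_xy /norP[ba_xy not_on_p]].
by rewrite /cut_edge xy IH // andbT ![x == _]eq_sym ![y == _]eq_sym negb_or ab_xy ba_xy.
Qed.

Section Tree.

Variables (T : finType) (e : rel T).
Hypothesis tree_e : is_tree e.

Let sym_e : symmetric e. Proof. by case: tree_e. Qed.

Lemma cut_edge_sym u v : symmetric (cut_edge e u v).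
Proof.
move=> c d; rewrite /cut_edge sym_e.
by case: (c == u); case: (d == v); case: (c == v); case: (d == u).
Qed.

Lemma branch_tail u v : e u v -> ~~ branch e u v u.
Proof.
have [_ irr_e _ acyc_e] := tree_e; move=> uv; apply/negP.
rewrite /branch (sym_connect_sym (cut_edge_sym u v)) => /connectP[q uq lastq].
move: lastq; case: (shortenP uq) => q' uq' uniq_q' _ lastq.
have neq_uv : u != v by apply: contraTneq uv => ->; rewrite irr_e.
have long_cycle : 2 < size (u :: q').
  case: q' uq' uniq_q' lastq => [|a [|b r]] //=; first by move=> _ _ vu; rewrite vu eqxx in neq_uv.
  by move=> /andP[/andP[_ ab] _] _ va; rewrite -va !eqxx in ab.
move/negP: (acyc_e _ uniq_q' long_cycle); apply.
rewrite /= rcons_path -lastq sym_e uv andbT.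
by apply: sub_path uq' => c d /andP[].
Qed.

Lemma branch_boundary u v w w' :
  e u v -> branch e u v w -> ~~ branch e u v w' -> (w == w') || e w w' ->
  w = v /\ w' = u.
Proof.
move=> uv bw nbw' /orP[/eqP eq_ww'|ww']; first by rewrite -eq_ww' bw in nbw'.
have [cut_ww'|] := boolP (cut_edge e u v w w').
  by case/negP: nbw'; apply: connect_trans bw (connect1 cut_ww').
rewrite /cut_edge ww' negbK => /orP[/andP[/eqP eq_wu _]|/andP[/eqP -> /eqP ->]] //.
by rewrite eq_wu (negbTE (branch_tail uv)) in bw.
Qed.

Lemma path_notin_branch x p u v q :
  e u v -> path e x p -> ~~ edge_on_path x p u v ->
  dist_to_path e x p u <= dist_to_path e x p v -> q \in x :: p -> ~~ branch e u v q.
Proof.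
have [_ _ conn_e _] := tree_e.
move=> uv xp not_on_p le_uv pq; apply/negP => bq.
have path_in_branch r : r \in x :: p -> branch e u v r.
  have conn := path_connect (path_cut_edge xp not_on_p).
  move=> pr; apply: connect_trans bq _; apply: (connect_trans (y := x)).
    by rewrite (sym_connect_sym (cut_edge_sym u v)); exact: conn.
  exact: conn.
(* A shortest walk from u to its nearest vertex q0 of P enters the branch
   through the edge uv, so v is strictly nearer to q0 than u. *)
have [q0 pq0 dist_q0] := dist_to_path_attained e x p u.
have /existsP[t /andP[ut /eqP last_t]] := gdist_walk (conn_e u q0).
have b_end : branch e u v (last u t) by rewrite last_t path_in_branch.
have [t1 [b [t2 [eq_t nb_last b_b last_b]]]] := path_enter ut (branch_tail uv) b_end.
have b_last : (b == last u t1) || e b (last u t1) by rewrite sym_e last_b orbT.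
have [eq_bv _] := branch_boundary uv b_b nb_last b_last.
have vt2 : path e v t2.
  by move: ut; rewrite eq_t cat_path /= eq_bv => /and3P[_ _ ->].
have last_t2 : last v t2 = q0 by rewrite -eq_bv -last_t eq_t last_cat.
have size_t : size t = gdist e u q0 := size_tuple t.
rewrite eq_t size_cat /= in size_t.
have le_vq0 : gdist e v q0 <= size t2 by rewrite -last_t2 gdist_le_path.
have lt_t2 : size t2 < gdist e u q0 by rewrite -size_t addnS ltnS leq_addl.
have le_uq0 : gdist e u q0 <= size t2.
  exact: leq_trans dist_q0 (leq_trans le_uv (leq_trans (dist_to_path_le e v pq0) le_vq0)).
by rewrite ltnNge le_uq0 in lt_t2.
Qed.

Lemma config_sub_branch k (C : k.-tuple T) u v z :
  is_config e C -> z \in C -> branch e u v z -> k <= gdist e u z -> all (branch e u v) C.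
Proof.
move=> conf_C zC bz far_z.
have uC : u \notin C by apply: contraTN far_z => uC; rewrite -ltnNge (config_gdist_lt conf_C).
case/andP: conf_C => _ /forallP conn_C; apply/allP => w wC; rewrite /branch in bz *.
have sub_cut : subrel (induced e C) (connect (cut_edge e u v)).
  move=> a b /and3P[ab aC bC]; apply: connect1.
  have [au bu] : a != u /\ b != u by split; apply: contraNneq uC => <-.
  by rewrite /cut_edge ab (negbTE au) (negbTE bu) andbF.
exact: connect_trans bz (connect_sub sub_cut (implyP (implyP (forallP (conn_C z) w) zC) wC)).
Qed.

Lemma config_adj_sym k (C D : k.-tuple T) : config_adj e C D -> config_adj e D C.
Proof. by move=> /forallP CD; apply/forallP => i; have := CD i; rewrite eq_sym sym_e. Qed.

Lemma config_adj_leave_branch k (C D : k.-tuple T) u v :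
  e u v -> config_adj e C D -> all (branch e u v) C -> ~~ all (branch e u v) D ->
  exists i, tnth C i = v /\ tnth D i = u.
Proof.
move=> uv /forallP CD /allP C_in /allPn[w /tnthP[i ->] nb_Di].
by exists i; apply: branch_boundary uv (C_in _ (mem_tnth i C)) nb_Di (CD i).
Qed.

Lemma config_adj_enter_branch k (C D : k.-tuple T) u v :
  e u v -> config_adj e C D -> ~~ all (branch e u v) C -> all (branch e u v) D ->
  exists i, tnth C i = u /\ tnth D i = v.
Proof.
move=> uv /config_adj_sym DC nC D_in.
by have [i []] := config_adj_leave_branch uv DC D_in nC; exists i.
Qed.

End Tree.

Section RestrictedWalk.

Variables (T : finType) (e : rel T) (k : nat) (c0 : k.-tuple T) (s : seq (k.-tuple T)).
Hypotheses (tree_e : is_tree e) (walk_cs : restricted_walk e c0 s) (span_cs : spanning c0 s).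

Local Notation conf t := (nth c0 (c0 :: s) t).
Local Notation inside u v t := (all (branch e u v) (conf t)).

Lemma conf_rstep t : t < size s -> rstep e (conf t) (conf t.+1).
Proof. by case/andP: walk_cs => _ /(pathP c0); apply. Qed.

Lemma conf_config t : t <= size s -> is_config e (conf t).
Proof. by case/andP: walk_cs => /allP confs _ ts; apply/confs/mem_nth. Qed.

Lemma first_occ_le z : first_occ c0 s z <= size s.
Proof. by have := span_cs z; rewrite has_find. Qed.

Lemma first_occ_gt0 z : z \notin c0 -> 0 < first_occ c0 s z.
Proof. by rewrite /first_occ /= => /negbTE->. Qed.

Lemma mem_conf_first_occ z : z \in conf (first_occ c0 s z).
Proof. exact: nth_find (span_cs z). Qed.

Lemma notin_conf_before z t : t < first_occ c0 s z -> z \notin conf t.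
Proof. by move/(before_find c0) => ->. Qed.

Lemma fresh_vertex_uniq t z z' : t < size s ->
  z \in conf t.+1 -> z \notin conf t -> z' \in conf t.+1 -> z' \notin conf t -> z = z'.
Proof.
move=> /conf_rstep/andP[_ /cards1P[w Ew]] z1 z0 z'1 z'0.
have : z \in [set a | (a \in conf t.+1) && (a \notin conf t)] by rewrite inE z1 z0.
have : z' \in [set a | (a \in conf t.+1) && (a \notin conf t)] by rewrite inE z'1 z'0.
by rewrite Ew !inE => /eqP-> /eqP->.
Qed.

Definition leave_step u v : nat :=
  find (fun t => inside u v t && ~~ inside u v t.+1) (iota 0 (size s)).

Definition leaves_branch u v : Prop :=
  [/\ e u v, ~~ inside u v 0 &
      exists t0 t1, [/\ t0 <= t1, t1 <= size s, inside u v t0 & ~~ inside u v t1]].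

Section LeaveStep.

Variables u v : T.
Hypothesis leaves_uv : leaves_branch u v.

Local Notation t := (leave_step u v).

Lemma leave_step_spec : [/\ t < size s, inside u v t & ~~ inside u v t.+1].
Proof.
have [_ _ [t0 [t1 [le_01 le_1s in0 out1]]]] := leaves_uv.
have [t' /andP[_ lt_t'1] switch] := nat_switch (P := fun t => inside u v t) le_01 in0 out1.
have has_switch : has (fun t => inside u v t && ~~ inside u v t.+1) (iota 0 (size s)).
  by apply/hasP; exists t'; rewrite // mem_iota add0n (leq_trans lt_t'1 le_1s).
have := nth_find 0 has_switch; rewrite has_find size_iota in has_switch.
by rewrite nth_iota // add0n => /andP[]; split.
Qed.

Lemma leave_step_agent : exists i, tnth (conf t) i = v /\ tnth (conf t.+1) i = u.
Proof.
have [uv _ _] := leaves_uv; have [lt_ts in_t out_t1] := leave_step_spec.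
by apply: config_adj_leave_branch in_t out_t1 => //; case/andP: (conf_rstep lt_ts).
Qed.

Lemma leave_step_fresh : u \in conf t.+1 /\ u \notin conf t.
Proof.
have [uv _ _] := leaves_uv; have [_ in_t _] := leave_step_spec.
have [i [_ Di]] := leave_step_agent; split; first by rewrite -[X in X \in _]Di mem_tnth.
by apply/negP => /(allP in_t) bu; move: (branch_tail tree_e uv); rewrite bu.
Qed.

Lemma leave_step_revisit : exists2 j, j < t & u \in conf j.
Proof.
have [uv out0 _] := leaves_uv; have [lt_ts in_t _] := leave_step_spec.
have in_t' : ~~ ~~ inside u v t by rewrite negbK.
have [j /andP[_ lt_jt] /andP[out_j /negbNE in_j1]] :=
  nat_switch (P := fun j => ~~ inside u v j) (leq0n t) out0 in_t'.
have /andP[adj_j _] := conf_rstep (ltn_trans lt_jt lt_ts).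
have [i [Cj _]] := config_adj_enter_branch tree_e uv adj_j out_j in_j1.
by exists j; rewrite // -Cj mem_tnth.
Qed.

End LeaveStep.

Lemma leave_step_inj u v u' v' : leaves_branch u v -> leaves_branch u' v' ->
  leave_step u v = leave_step u' v' -> (u, v) = (u', v').
Proof.
move=> luv lu'v' eq_t; have [lt_ts _ _] := leave_step_spec luv.
have [i [Ci Di]] := leave_step_agent luv; have [i' [Ci' Di']] := leave_step_agent lu'v'.
have [u1 u0] := leave_step_fresh luv; have [u'1 u'0] := leave_step_fresh lu'v'.
rewrite -eq_t in Ci' Di' u'1 u'0.
have eq_uu' := fresh_vertex_uniq lt_ts u1 u0 u'1 u'0.
have /andP[/tuple_uniqP inj_t1 _] := conf_config lt_ts.
have eq_ii' : i = i' by apply: inj_t1; rewrite Di Di'.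
by rewrite -Ci -Ci' eq_ii' eq_uu'.
Qed.

Lemma leave_step_neq_first_visit u v z : leaves_branch u v -> z \notin c0 ->
  leave_step u v != (first_occ c0 s z).-1.
Proof.
move=> luv z_new; apply/eqP => eq_t; have [lt_ts _ _] := leave_step_spec luv.
have [u1 u0] := leave_step_fresh luv; have [j lt_jt uj] := leave_step_revisit luv.
have occ_z : (leave_step u v).+1 = first_occ c0 s z by rewrite eq_t prednK ?first_occ_gt0.
have z1 : z \in conf (leave_step u v).+1 by rewrite occ_z mem_conf_first_occ.
have z0 : z \notin conf (leave_step u v) by apply: notin_conf_before; rewrite -occ_z.
have eq_zu := fresh_vertex_uniq lt_ts z1 z0 u1 u0.
have lt_jz : j < first_occ c0 s z by rewrite -occ_z ltnS ltnW.
by move: (notin_conf_before lt_jz); rewrite eq_zu uj.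
Qed.

Lemma restricted_walk_size_ge (O : {set T * T}) :
  (forall uv, uv \in O -> leaves_branch uv.1 uv.2) ->
  #|[set z | z \notin c0]| + #|O| <= size s.
Proof.
move=> O_leaves; set A := [set z | z \notin c0].
pose visit z := (first_occ c0 s z).-1.
pose leave uv := leave_step uv.1 uv.2.
have visit_spec z : z \in A ->
    [/\ visit z < size s, z \in conf (visit z).+1 & z \notin conf (visit z)].
  rewrite inE => z_new; have pos_z := first_occ_gt0 z_new.
  have occ_z : (visit z).+1 = first_occ c0 s z by rewrite prednK.
  split; first by rewrite -ltnS occ_z ltnS first_occ_le.
    by rewrite occ_z mem_conf_first_occ.
  by apply: notin_conf_before; rewrite -occ_z.
have visit_inj : {in enum A &, injective visit}.
  move=> z z'; rewrite !mem_enum => /visit_spec[lt_zs z1 z0] /visit_spec[_ z'1 z'0] eq_zz'.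
  by rewrite -eq_zz' in z'1 z'0; apply: fresh_vertex_uniq lt_zs z1 z0 z'1 z'0.
have leave_inj : {in enum O &, injective leave}.
  move=> [u v] [u' v']; rewrite !mem_enum => /O_leaves luv /O_leaves lu'v'.
  exact: leave_step_inj.
have steps_uniq : uniq (map visit (enum A) ++ map leave (enum O)).
  rewrite cat_uniq !map_inj_in_uniq ?enum_uniq //= andbT.
  apply/hasPn => _ /mapP[uv uvO ->]; apply/mapP => [[z zA]].
  rewrite mem_enum inE in zA; rewrite mem_enum in uvO.
  by apply/eqP; apply: leave_step_neq_first_visit (O_leaves _ uvO) zA.
have steps_sub : {subset map visit (enum A) ++ map leave (enum O) <= iota 0 (size s)}.
  move=> t; rewrite mem_cat mem_iota add0n => /orP[/mapP[z zA ->]|/mapP[uv uvO ->]].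
    by rewrite mem_enum in zA; case: (visit_spec z zA).
  by rewrite mem_enum in uvO; case: (leave_step_spec (O_leaves _ uvO)).
by have := uniq_leq_size steps_uniq steps_sub; rewrite size_cat !size_map size_iota -!cardE.
Qed.

End RestrictedWalk.

Section CountedEdges.

Variables (T : finType) (e : rel T) (k : nat) (x : T) (p : seq T).
Hypothesis sym_e : symmetric e.

Local Notation dist := (dist_to_path e x p).

Definition counted_edges : {set T * T} :=
  [set uv | [&& e uv.1 uv.2, ~~ edge_on_path x p uv.1 uv.2,
                dist uv.1 <= dist uv.2 & d_oriented e k uv.1 uv.2]].

Definition orient_edge (ab : T * T) : T * T :=
  if dist ab.1 < dist ab.2 then ab else (ab.2, ab.1).

Lemma dkP_le_counted a b : e a b -> dkP e k x p a b <= (orient_edge (a, b) \in counted_edges).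
Proof.
move=> ab; rewrite /dkP /orient_edge inE /=.
case: ifP => [//|not_on_p]; case: ifP => [lt_ab|le_ba]; case: d_oriented => //=.
  by rewrite ab not_on_p (ltnW lt_ab).
by rewrite sym_e ab edge_on_pathC not_on_p (leqNgt (dist b)) le_ba.
Qed.

Lemma sum_dkP_le_card : sum_dkP e k x p <= #|counted_edges|.
Proof.
pose B := [set ab : T * T | [&& e ab.1 ab.2, enum_rank ab.1 < enum_rank ab.2 &
                                orient_edge ab \in counted_edges]].
have sum_le_B : sum_dkP e k x p <= #|B|.
  rewrite /sum_dkP; under eq_bigr do rewrite big_mkcond.
  rewrite pair_big /= -(sum1_card (mem B)) [X in _ <= X]big_mkcond /=.
  apply: leq_sum => [[a b]] _; rewrite inE /=.
  case: ifP => // /andP[ab ->]; rewrite ab /=.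
  by have := dkP_le_counted ab; case: (_ \in _).
have orient_inj : {in B &, injective orient_edge}.
  move=> [a b] [a' b']; rewrite !inE /= => /and3P[_ r_ab _] /and3P[_ r_a'b' _].
  rewrite /orient_edge /=; case: ifP => _; case: ifP => _ [? ?]; subst => //;
    by have := ltn_trans r_ab r_a'b'; rewrite ltnn.
rewrite (leq_trans sum_le_B) // -(card_in_imset orient_inj) subset_leq_card //.
by apply/subsetP => _ /imsetP[ab + ->]; rewrite inE => /and3P[].
Qed.

End CountedEdges.

Lemma counted_edge_leaves_branch (T : finType) (e : rel T) k (c0 : k.-tuple T) s x y p u v :
  is_tree e -> restricted_walk e c0 s -> spanning c0 s ->
  (forall z, first_occ c0 s z <= first_occ c0 s y) -> x \in c0 ->
  path e x p -> last x p = y ->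
  (u, v) \in counted_edges e k x p -> leaves_branch e c0 s u v.
Proof.
move=> tree_e walk span y_last x_c0 xp last_y.
rewrite inE /= => /and4P[uv not_on_p le_uv /existsP[z /andP[bz far_z]]].
have off_branch q : q \in x :: p -> ~~ branch e u v q.
  exact: (path_notin_branch tree_e uv xp not_on_p le_uv).
split=> //; first by apply/allPn; exists x; rewrite ?off_branch ?mem_head.
exists (first_occ c0 s z), (first_occ c0 s y); split; rewrite ?y_last ?first_occ_le //.
  have conf_z := conf_config walk (first_occ_le span z).
  exact: config_sub_branch conf_z (mem_conf_first_occ span z) bz far_z.
apply/allPn; exists y; first exact: mem_conf_first_occ.
by rewrite off_branch // -last_y mem_last.
Qed.

Unset Implicit Arguments.

Theorem mainTheorem5 (T : finType) (e : rel T) (k : nat)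
    (c0 : k.-tuple T) (s : seq (k.-tuple T)) (x y : T) (p : seq T) :
  is_tree e ->
  1 <= k -> k <= #|T| ->
  optimal_walk e c0 s ->
  (forall z : T, first_occ c0 s z <= first_occ c0 s y) ->
  x \in c0 ->
  (forall x' : T, x' \in c0 -> gdist e x' y <= gdist e x y) ->
  is_simple_path e x y p ->
  (#|T| - k) + sum_dkP e k x p <= size s.
Proof.
move=> tree_e _ _ [walk span _] y_last x_c0 _ [xp last_y _].
have [sym_e _ _ _] := tree_e.
have /andP[uniq_c0 _] : is_config e c0 := conf_config walk (leq0n (size s)).
rewrite -(card_notin_tuple uniq_c0).
apply: leq_trans (leq_add (leqnn _) (sum_dkP_le_card k x p sym_e)) _.
apply: (restricted_walk_size_ge tree_e walk span) => -[u v].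
exact: counted_edge_leaves_branch.
Qed.
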